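(* Let $A$ and $B$ be Young functions such that $B \ll A$ near infinity. Then there exists a Young function $C$ such that $B \ll C$ and $C \ll A$ near infinity.
   Context: A Young function is a convex function $A:[0,\infty)\to[0,\infty]$ with $A(0)=0$ which is neither identically $0$ nor identically $+\infty$. For Young functions $A,B$, one says that $B$ increases essentially more slowly than $A$ near infinity, written $B\ll A$, if $B$ is finite valued and $\lim_{t\to\infty} B(\lambda t)/A(t)=0$ for every $\lambda>0$. *)

From HB Require Import structures.
From mathcomp Require Import all_boot all_order all_algebra.
From mathcomp Require Import all_classical all_reals all_analysis.
Set Implicit Arguments. Unset Strict Implicit. Unset Printing Implicit Defensive.
Import Order.TTheory GRing.Theory Num.Theory.
Import numFieldNormedType.Exports.
Local Open Scope classical_set_scope.
Local Open Scope ring_scope.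
Local Open Scope ereal_scope.

(* A Young function: convex A : [0,oo) -> [0,oo] with A 0 = 0, neither
   identically 0 nor identically +oo on [0,oo).  Values of A at negative
   arguments are irrelevant. *)
Definition young_function (R : realType) (A : R -> \bar R) : Prop :=
  [/\ (forall t : R, (0 <= t)%R -> 0 <= A t),
      A 0%R = 0,
      (forall (x y l : R), (0 <= x)%R -> (0 <= y)%R -> (0 < l < 1)%R ->
          A (l * x + (1 - l) * y)%R <= l%:E * A x + (1 - l)%:E * A y),
      (exists t : R, (0 <= t)%R /\ A t != 0) &
      (exists t : R, (0 <= t)%R /\ A t != +oo)].

(* B increases essentially more slowly than A near infinity (B << A):
   B is finite valued and B(l t)/A(t) -> 0 as t -> +oo for every l > 0
   (division in the extended reals, with r/+oo = 0). *)
Definition ess_slower (R : realType) (B A : R -> \bar R) : Prop :=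
  (forall t : R, (0 <= t)%R -> B t \is a fin_num) /\
  (forall l : R, (0 < l)%R -> B (l * t)%R / A t @[t --> +oo%R] --> 0).

From mathcomp Require Import all_boot all_order all_algebra.
From mathcomp Require Import all_classical all_reals all_analysis.
From mathcomp Require Import ring lra.
Set Implicit Arguments. Unset Strict Implicit. Unset Printing Implicit Defensive.
Import Order.TTheory GRing.Theory Num.Theory.
Local Open Scope classical_set_scope.
Local Open Scope ring_scope.

(* Let b be the (finite) restriction of B to [0, oo) and choose thresholds
   T_k >= 1 with B(k^2 t) <= A(t) / k for t >= T_k.  The functions
   f_k(t) = max(0, b(k t) - b(k^2 T_k)) are convex and vanish for t <= k T_k,
   so their supremum C is finite (f_k(t) <= b(t^2)) and convex.  At a point
   l t, the f_k with k <= K are bounded by b(K l t) = o(A t), and the others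
   either vanish or are bounded by b(k^2 t) <= A(t) / k; hence C << A.
   Conversely, for large t, C(t) >= f_k(t) >= b(k t) / 2, while
   b(l t) <= (l / k) b(k t) by convexity; hence B << C. *)

Section RealYoungFunction.
Variable R : realType.

Definition convex_on_nonneg (b : R -> R) := forall x y l : R,
  0 <= x -> 0 <= y -> 0 < l < 1 ->
  b (l * x + (1 - l) * y) <= l * b x + (1 - l) * b y.

Definition real_young_function (b : R -> R) :=
  [/\ b 0 = 0, forall t, 0 <= t -> 0 <= b t, convex_on_nonneg b &
      exists t, 0 <= t /\ b t != 0].

Lemma convex_comb_ge0 (x y l : R) : 0 <= x -> 0 <= y -> 0 < l < 1 ->
  0 <= l * x + (1 - l) * y.
Proof.
by move=> x0 y0 /andP[l0 l1]; rewrite addr_ge0 // mulr_ge0 // ?subr_ge0 ltW.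
Qed.

Lemma young_fine (B : R -> \bar R) : young_function B ->
  (forall t, 0 <= t -> B t \is a fin_num) -> real_young_function (fine \o B).
Proof.
move=> [B_ge0 B0 B_cvx [u [u0 Bu]] _] B_fin.
have BE t : 0 <= t -> B t = (fine (B t))%:E by move=> t0; rewrite fineK ?B_fin.
split=> /=; first by rewrite B0.
- by move=> s s0; rewrite -lee_fin -BE ?B_ge0.
- move=> x y l x0 y0 l01.
  by rewrite -lee_fin EFinD !EFinM -!BE ?convex_comb_ge0 ?B_cvx.
- by exists u; split=> //; rewrite -eqe -BE.
Qed.

Lemma young_EFin (c : R -> R) : real_young_function c -> young_function (EFin \o c).
Proof.
move=> [c0 c_ge0 c_cvx [t [t0 ct]]]; split=> /=.
- by move=> s s0; rewrite lee_fin c_ge0.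
- by rewrite c0.
- by move=> x y l x0 y0 l01; rewrite -!EFinM -EFinD lee_fin c_cvx.
- by exists t; split=> //; rewrite eqe.
- by exists 0; split.
Qed.

Section ConvexNonneg.
Variable b : R -> R.
Hypotheses (b0 : b 0 = 0) (b_ge0 : forall t, 0 <= t -> 0 <= b t).
Hypothesis b_convex : convex_on_nonneg b.

Lemma convex_ratio_le x y : 0 <= x -> x <= y -> 0 < y -> b x * y <= x * b y.
Proof.
move=> x0 xy y0; have [->|x_neq0] := eqVneq x 0; first by rewrite b0 !mul0r.
have [<-|x_neqy] := eqVneq x y; first by rewrite mulrC.
have x_gt0 : 0 < x by rewrite lt_neqAle eq_sym x_neq0.
have x_lt_y : x < y by rewrite lt_neqAle x_neqy.
have xy01 : 0 < x / y < 1 by rewrite divr_gt0 //= ltr_pdivrMr // mul1r.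
have := b_convex (ltW y0) (lexx 0) xy01.
rewrite b0 !mulr0 !addr0 divfK ?gt_eqF // => /(ler_wpM2r (ltW y0)).
by rewrite mulrAC divfK ?gt_eqF // mulrC.
Qed.

Lemma convex_nondecreasing x y : 0 <= x -> x <= y -> b x <= b y.
Proof.
move=> x0 xy; have [y0|y_neq0] := eqVneq y 0.
  by have -> : x = y by apply/le_anti; rewrite xy y0 x0.
have y0 : 0 < y by rewrite lt_neqAle eq_sym y_neq0 (le_trans x0 xy).
rewrite -(ler_pM2r y0); apply: le_trans (convex_ratio_le x0 xy y0) _.
by rewrite mulrC ler_wpM2l // b_ge0 // ltW.
Qed.

Hypothesis b_nontrivial : exists t, 0 <= t /\ b t != 0.

Lemma convex_unbounded M : exists S, forall s, S <= s -> M <= b s.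
Proof.
have [t [t0 bt_neq0]] := b_nontrivial.
have t_gt0 : 0 < t.
  by rewrite lt_neqAle t0 andbT; apply: contraNneq bt_neq0 => <-; rewrite b0.
have bt_gt0 : 0 < b t by rewrite lt_neqAle eq_sym bt_neq0 b_ge0.
exists (Num.max t (M * t / b t)) => s; rewrite ge_max => /andP[ts Ms].
rewrite -(ler_pM2l t_gt0).
apply: le_trans (convex_ratio_le t0 ts (lt_le_trans t_gt0 ts)).
by move: Ms; rewrite ler_pdivrMr // mulrC [b t * s]mulrC.
Qed.

End ConvexNonneg.
End RealYoungFunction.

Lemma nbhs_pinfty_mul_ge0 (R : realType) (l : R) : 0 < l ->
  \forall t \near +oo, 0 <= l * t.
Proof.
move=> l0; near=> t; apply: mulr_ge0; first exact: ltW.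
by near: t; exact: nbhs_pinfty_ge.
Unshelve. all: by end_near.
Qed.

Section ExtendedRatio.
Variable R : realType.
Local Open Scope ereal_scope.

(* Valid also for y = 0 and y = +oo, because 0 * +oo = 0 in \bar R. *)
Lemma ediv_le (x y : \bar R) (e : R) : 0 <= x -> 0 <= y -> (0 < e)%R ->
  (x / y <= e%:E) = (x <= e%:E * y).
Proof.
move=> x0 y0 e0; have e_gt0 : 0 < e%:E by rewrite lte_fin.
case: x x0 => [x| |] // x0; case: y y0 => [y| |] // y0.
- have [->|y_neq0] := eqVneq y 0%R.
    rewrite inve0 mule0; have [->|x_neq0] := eqVneq x 0%R.
      by rewrite mul0e (ltW e_gt0) lexx.
    have x_gt0 : 0 < x%:E by rewrite lt_neqAle eq_sym eqe x_neq0 x0.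
    by rewrite gt0_muley // leye_eq leNgt x_gt0.
  have y_gt0 : (0 < y)%R by rewrite lt_neqAle eq_sym y_neq0 -lee_fin.
  by rewrite inver (negbTE y_neq0) -EFinM -EFinM !lee_fin ler_pdivrMr // mulrC.
- by rewrite invey mule0 gt0_muley // (ltW e_gt0) leey.
- have [->|y_neq0] := eqVneq y 0%R.
    by rewrite inve0 mule0 mulyy !leye_eq.
  have y_gt0 : (0 < y)%R by rewrite lt_neqAle eq_sym y_neq0 -lee_fin.
  by rewrite inver (negbTE y_neq0) gt0_mulye ?lte_fin ?invr_gt0 // -EFinM !leye_eq.
- by rewrite invey mule0 gt0_muley // (ltW e_gt0) lexx.
Qed.

Lemma nonneg_cvge0P {T : Type} (F : set_system T) {FF : Filter F} (u : T -> \bar R) :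
  (\forall t \near F, 0 <= u t) ->
  u t @[t --> F] --> 0 <-> forall e, (0 < e)%R -> \forall t \near F, u t <= e%:E.
Proof.
move=> u_ge0; split.
  move=> /fine_cvgP[u_fin /cvgrPdist_le u0] e /u0.
  apply: filterS2 u_fin => t /fineK <- /=.
  by rewrite sub0r normrN lee_fin => /(le_trans (ler_norm _)).
move=> u_le; apply/fine_cvgP; split.
  by apply: filterS2 u_ge0 (u_le _ ltr01) => t; case: (u t).
apply/cvgrPdist_le => e /u_le; apply: filterS2 u_ge0 => t /=.
by case: (u t) => // r; rewrite !lee_fin sub0r normrN => r0 re; rewrite ger0_norm.
Qed.

Lemma ess_slowerP (B A : R -> \bar R) :
  (forall t, (0 <= t)%R -> 0 <= B t) -> (forall t, (0 <= t)%R -> 0 <= A t) ->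
  ess_slower B A <->
  (forall t, (0 <= t)%R -> B t \is a fin_num) /\
  forall l e : R, (0 < l)%R -> (0 < e)%R ->
    \forall t \near +oo%R, B (l * t)%R <= e%:E * A t.
Proof.
move=> B_ge0 A_ge0.
have BA_ge0 l : (0 < l)%R -> \forall t \near +oo%R, 0 <= B (l * t)%R /\ 0 <= A t.
  move=> l0; apply: filterS2 (nbhs_pinfty_mul_ge0 l0) (nbhs_pinfty_mul_ge0 ltr01).
  by move=> t /B_ge0 -> /=; rewrite mul1r => /A_ge0.
have ratio_ge0 l : (0 < l)%R -> \forall t \near +oo%R, 0 <= B (l * t)%R / A t.
  by move=> /BA_ge0; apply: filterS => t [? ?]; rewrite mule_ge0 ?inve_ge0.
split=> -[B_fin BA]; split=> // l.
- move=> e l0 e0; have /nonneg_cvge0P/(_ e e0) := BA l l0.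
  move=> /(_ (ratio_ge0 l l0)); apply: filterS2 (BA_ge0 l l0) => t [? ?].
  by rewrite ediv_le.
- move=> l0; apply/nonneg_cvge0P; first exact: ratio_ge0.
  move=> e e0; apply: filterS2 (BA_ge0 l l0) (BA l e l0 e0) => t [? ?].
  by rewrite ediv_le.
Qed.

End ExtendedRatio.

Lemma pinfty_thresholds (R : realType) (P : nat -> R -> Prop) (m : R) :
  (forall k, \forall t \near +oo, P k t) ->
  exists T : nat -> R, (forall k, m <= T k) /\ forall k t, T k <= t -> P k t.
Proof.
move=> P_near; have /choice[T T_spec] : forall k, exists T : R,
    m <= T /\ forall t, T <= t -> P k t.
  move=> k; have [M [_ PM]] := P_near k.
  exists (Num.max m (M + 1)); split=> [|t]; first by rewrite le_max lexx.
  by rewrite ge_max => /andP[_ Mt]; apply: PM; apply: lt_le_trans Mt; rewrite ltrDl.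
by exists T; split=> k; have [] := T_spec k.
Qed.

Section IntermediateFunction.
Variable R : realType.
Variables (b : R -> R) (A : R -> \bar R).
Hypothesis b_young : real_young_function b.
Hypothesis A_ge0 : forall t, 0 <= t -> (0 <= A t)%E.
Hypothesis b_slower_A : forall l e, 0 < l -> 0 < e ->
  \forall t \near +oo, ((b (l * t))%:E <= e%:E * A t)%E.

Let b0 : b 0 = 0. Proof. by case: b_young. Qed.
Let b_ge0 : forall t, 0 <= t -> 0 <= b t. Proof. by case: b_young. Qed.
Let b_convex : convex_on_nonneg b. Proof. by case: b_young. Qed.
Let b_nontrivial : exists t, 0 <= t /\ b t != 0. Proof. by case: b_young. Qed.
Let b_nondecreasing := convex_nondecreasing b0 b_ge0 b_convex.

Lemma slowness_thresholds : exists T : nat -> R, (forall k, 1 <= T k) /\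
  forall k t, T k <= t -> ((b (k%:R ^+ 2 * t))%:E <= (k%:R^-1)%:E * A t)%E.
Proof.
apply: pinfty_thresholds => -[|k].
  by near=> t; rewrite expr2 !mul0r b0 invr0 mul0e.
have k_gt0 : 0 < k.+1%:R :> R by rewrite ltr0n.
by apply: b_slower_A; rewrite ?invr_gt0 ?exprn_gt0.
Unshelve. all: by end_near.
Qed.

Variable T : nat -> R.
Hypothesis T_ge1 : forall k, 1 <= T k.

Let T_ge0 k : 0 <= T k. Proof. exact: le_trans (T_ge1 k). Qed.

Definition truncated_dilation (k : nat) (t : R) :=
  Num.max 0 (b (k%:R * t) - b (k%:R ^+ 2 * T k)).

Definition intermediate (t : R) := sup (range (truncated_dilation ^~ t)).

Lemma truncated_dilation_ge0 k t : 0 <= truncated_dilation k t.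
Proof. by rewrite le_max lexx. Qed.

Lemma truncated_dilation_ge k t :
  b (k%:R * t) - b (k%:R ^+ 2 * T k) <= truncated_dilation k t.
Proof. by rewrite le_max lexx orbT. Qed.

Lemma truncated_dilation_le k t : 0 <= t -> truncated_dilation k t <= b (k%:R * t).
Proof.
by move=> t0; rewrite ge_max b_ge0 ?mulr_ge0 //= gerBl b_ge0 ?mulr_ge0 ?exprn_ge0.
Qed.

Lemma truncated_dilation_eq0 k t : 0 <= t ->
  k%:R * t <= k%:R ^+ 2 * T k -> truncated_dilation k t = 0.
Proof.
move=> t0 kt_le; apply/le_anti; rewrite truncated_dilation_ge0 andbT.
by rewrite ge_max lexx subr_le0 b_nondecreasing ?mulr_ge0.
Qed.

Lemma truncated_dilation_le_sq k t : 0 <= t -> truncated_dilation k t <= b (t * t).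
Proof.
move=> t0; have [kt|tk] := lerP k%:R t.
  apply: le_trans (truncated_dilation_le k t0) _.
  by rewrite b_nondecreasing ?mulr_ge0 ?ler_wpM2r.
rewrite truncated_dilation_eq0 ?b_ge0 ?mulr_ge0 //.
apply: (@le_trans _ _ (k%:R * k%:R)); first by rewrite ler_wpM2l // ltW.
by rewrite expr2 ler_peMr ?mulr_ge0.
Qed.

Lemma truncated_dilation_convex k : convex_on_nonneg (truncated_dilation k).
Proof.
move=> x y l x0 y0 l01; have /andP[l0 l1] := l01.
have l'0 : 0 <= 1 - l by rewrite subr_ge0 ltW.
rewrite ge_max addr_ge0 ?mulr_ge0 ?truncated_dilation_ge0 ?(ltW l0) //=.
have -> : k%:R * (l * x + (1 - l) * y) = l * (k%:R * x) + (1 - l) * (k%:R * y).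
  by ring.
have := b_convex (mulr_ge0 (ler0n _ k) x0) (mulr_ge0 (ler0n _ k) y0) l01.
have := ler_wpM2l (ltW l0) (truncated_dilation_ge k x).
have := ler_wpM2l l'0 (truncated_dilation_ge k y).
lra.
Qed.

Lemma le_intermediate k t : 0 <= t -> truncated_dilation k t <= intermediate t.
Proof.
move=> t0; apply: ub_le_sup; last by exists k.
by exists (b (t * t)) => _ [j _ <-]; exact: truncated_dilation_le_sq.
Qed.

Lemma intermediate_le t x :
  (forall k, truncated_dilation k t <= x) -> intermediate t <= x.
Proof.
move=> le_x; apply: ge_sup; first by exists (truncated_dilation 0 t), 0%N.
by move=> _ [k _ <-].
Qed.

Lemma intermediate_young : real_young_function intermediate.
Proof.
have c_ge0 t : 0 <= t -> 0 <= intermediate t.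
  by move=> t0; apply: le_trans (le_intermediate 0 t0); exact: truncated_dilation_ge0.
split=> //.
- apply/le_anti; rewrite c_ge0 // andbT; apply: intermediate_le => k.
  by rewrite truncated_dilation_eq0 ?mulr0 ?mulr_ge0 ?exprn_ge0.
- move=> x y l x0 y0 l01; apply: intermediate_le => k.
  apply: le_trans (truncated_dilation_convex k x0 y0 l01) _.
  have /andP[l0 l1] := l01.
  by apply: lerD; apply: ler_wpM2l; rewrite ?subr_ge0 ?le_intermediate // ltW.
- have [S HS] := convex_unbounded b0 b_ge0 b_convex b_nontrivial (b (T 1) + 1).
  have s0 : 0 <= Num.max 0 S by rewrite le_max lexx.
  have /HS bs : S <= Num.max 0 S by rewrite le_max lexx orbT.
  exists (Num.max 0 S); split=> //; rewrite gt_eqF //.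
  apply: lt_le_trans (le_intermediate 1 s0).
  move: bs; have := truncated_dilation_ge 1 (Num.max 0 S).
  rewrite mul1r expr1n mul1r; lra.
Qed.

Lemma dilation_slower_intermediate l e : 0 < l -> 0 < e ->
  \forall t \near +oo, b (l * t) <= e * intermediate t.
Proof.
move=> l0 e0; pose k := (Num.truncn (Num.max l (2 * l / e))).+1.
have := truncnS_gt (Num.max l (2 * l / e)); rewrite -/k gt_max => /andP[lk lek].
have k_gt0 : 0 < k%:R :> R by rewrite ltr0n.
have [S HS] :=
  convex_unbounded b0 b_ge0 b_convex b_nontrivial (2 * b (k%:R ^+ 2 * T k)).
near=> t.
have t_gt0 : 0 < t by near: t; exact: nbhs_pinfty_gt.
have /HS bkt : S <= k%:R * t.
  by rewrite -ler_pdivrMl //; near: t; apply: nbhs_pinfty_ge; exact: num_real.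
have bkt_le : b (k%:R * t) <= 2 * intermediate t.
  have := le_intermediate k (ltW t_gt0); have := truncated_dilation_ge k t; lra.
have kt_gt0 := mulr_gt0 k_gt0 t_gt0.
have lt0 : 0 <= l * t by rewrite mulr_ge0 // ltW.
have lt_le : l * t <= k%:R * t by rewrite ler_pM2r // ltW.
rewrite -(ler_pM2r kt_gt0).
apply: le_trans (convex_ratio_le b0 b_convex lt0 lt_le kt_gt0) _.
have c_ge0 : 0 <= intermediate t.
  exact: le_trans (truncated_dilation_ge0 0 t) (le_intermediate 0 (ltW t_gt0)).
have := ler_wpM2l lt0 bkt_le.
have : 2 * l * (t * intermediate t) <= e * k%:R * (t * intermediate t).
  apply: ler_wpM2r; first by rewrite mulr_ge0 // ltW.
  by rewrite ltW // [e * _]mulrC -ltr_pdivrMr.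
lra.
Unshelve. all: by end_near.
Qed.

Lemma intermediate_le_dominating (K : nat) l t a : 0 < l -> 0 <= t -> l <= K%:R ->
  b (K%:R * (l * t)) <= a ->
  (forall k, (K < k)%N -> T k <= t -> b (k%:R ^+ 2 * t) <= a) ->
  intermediate (l * t) <= a.
Proof.
move=> l0 t0 lK bK_le bk_le; have lt0 : 0 <= l * t by rewrite mulr_ge0 // ltW.
have a0 : 0 <= a by apply: le_trans _ bK_le; rewrite b_ge0 // mulr_ge0.
apply: intermediate_le => k; have [kK|Kk] := leqP k K.
  apply: le_trans (truncated_dilation_le k lt0) (le_trans _ bK_le).
  by apply: b_nondecreasing; [rewrite mulr_ge0 | apply: ler_wpM2r; rewrite ?ler_nat].
have [small|big] := lerP (k%:R * (l * t)) (k%:R ^+ 2 * T k).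
  by rewrite truncated_dilation_eq0.
have lk : l <= k%:R by apply: le_trans lK _; rewrite ler_nat ltnW.
have klt : k%:R * (l * t) <= k%:R ^+ 2 * t.
  by rewrite expr2 -mulrA ler_wpM2l // ler_wpM2r.
have Tt : T k <= t.
  rewrite -(ler_pM2l (_ : 0 < k%:R ^+ 2)) ?exprn_gt0 ?ltr0n ?(leq_ltn_trans _ Kk) //.
  exact: ltW (lt_le_trans big klt).
apply: le_trans (truncated_dilation_le k lt0) (le_trans _ (bk_le k Kk Tt)).
by apply: b_nondecreasing klt; rewrite mulr_ge0.
Qed.

Hypothesis T_threshold : forall k t, T k <= t ->
  ((b (k%:R ^+ 2 * t))%:E <= (k%:R^-1)%:E * A t)%E.

Lemma intermediate_slower l e : 0 < l -> 0 < e ->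
  \forall t \near +oo, ((intermediate (l * t))%:E <= e%:E * A t)%E.
Proof.
move=> l0 e0; pose K := (Num.truncn (Num.max l e^-1)).+1.
have := truncnS_gt (Num.max l e^-1); rewrite -/K gt_max => /andP[lK eK].
have K_gt0 : 0 < K%:R :> R by rewrite ltr0n.
near=> t.
have t0 : 0 <= t by near: t; exact: nbhs_pinfty_ge.
have bK : ((b (K%:R * l * t))%:E <= e%:E * A t)%E.
  by near: t; exact: b_slower_A (mulr_gt0 K_gt0 l0) e0.
move: (A_ge0 t0) (T_threshold ^~ t) bK; case: (A t) => [a a0 Tk bK| _ _ _|//].
  rewrite -EFinM lee_fin; apply: (intermediate_le_dominating (K := K)) => //.
  - exact: ltW.
  - by rewrite mulrA -lee_fin EFinM.
  move=> k Kk /Tk; rewrite -EFinM lee_fin => /le_trans; apply.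
  apply: ler_wpM2r => //.
  rewrite invf_ple ?posrE ?ltr0n ?(leq_ltn_trans _ Kk) //.
  by apply: le_trans (ltW eK) _; rewrite ler_nat ltnW.
by rewrite gt0_muley ?lte_fin // leey.
Unshelve. all: by end_near.
Qed.

End IntermediateFunction.

Theorem proposition2p6 (R : realType) (A B : R -> \bar R) :
  young_function A -> young_function B -> ess_slower B A ->
  exists C : R -> \bar R,
    young_function C /\ ess_slower B C /\ ess_slower C A.
Proof.
move=> A_young B_young BA.
have [A_ge0 _ _ _ _] := A_young; have [B_ge0 _ _ _ _] := B_young.
have [B_fin B_slower_A] := (ess_slowerP B_ge0 A_ge0).1 BA.
pose b := fine \o B.
have BE t : (0 <= t)%R -> B t = (b t)%:E by move=> t0; rewrite /b /= fineK ?B_fin.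
have b_young : real_young_function b := young_fine B_young B_fin.
have b_slower_A l e : (0 < l)%R -> (0 < e)%R ->
    \forall t \near +oo%R, ((b (l * t))%:E <= e%:E * A t)%E.
  move=> l0 e0; apply: filterS2 (B_slower_A l e l0 e0) (nbhs_pinfty_mul_ge0 l0).
  by move=> t + /BE <-.
have [T [T_ge1 T_threshold]] := slowness_thresholds b_young b_slower_A.
have C_young := young_EFin (intermediate_young b_young T_ge1).
have [C_ge0 _ _ _ _] := C_young.
exists (EFin \o intermediate b T); split=> //.
split; apply/ess_slowerP => //; split=> // l e l0 e0.
  have := dilation_slower_intermediate b_young T_ge1 l0 e0.
  apply: filterS2 (nbhs_pinfty_mul_ge0 l0) => t /BE -> /=.
  by rewrite -EFinM lee_fin.
exact: intermediate_slower.
Qed.
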